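(* Assume $\ker(K)\cap\ker(D)=\{0\}$ and let $\Psi$ be a reconstructor. Let $y^0=Kx^{GT}$, and let $\{\delta_k\}_{k\in\mathbb{N}}$ be a sequence of positive noise levels with $\delta_k\to0$ as $k\to\infty$, with data $y^{\delta_k}=Kx^{GT}+e_k$, $\|e_k\|_2\le\delta_k$. For each $k$ let $x^*_{\Psi,\delta_k}$ be the unique minimizer over $\mathcal{X}$ of $\mathcal{J}_{\Psi,\delta_k}(x)=\|Kx-y^{\delta_k}\|_2^2+\lambda\|w(\Psi(y^{\delta_k}))\odot|Dx|\|_1$, and let $x^*_{\Psi,0}$ denote the unique minimizer over $\mathcal{X}$ of $\mathcal{J}_{\Psi,0}(x)=\|Kx-y^{0}\|_2^2+\lambda\|w(\Psi(y^{0}))\odot|Dx|\|_1$. Then $\{x^*_{\Psi,\delta_k}\}_{k\in\mathbb{N}}$ has a convergent subsequence whose limit is $x^*_{\Psi,0}$.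
   Context: Let $K\in\mathbb{R}^{m\times n}$ with $m\le n$, and let $D_h,D_v\in\mathbb{R}^{n\times n}$ be the discrete horizontal and vertical difference operators; $Dx=\begin{bmatrix}D_hx\\ D_vx\end{bmatrix}\in\mathbb{R}^{2n}$, and $|Dx|\in\mathbb{R}^n$, $(|Dx|)_i=\sqrt{(D_hx)_i^2+(D_vx)_i^2}$. $\mathcal{X}=\{x\in\mathbb{R}^n: x_i\ge 0\ \forall i\}$; $x^{GT}\in\mathcal{X}$ is fixed. Fix $\lambda>0$, $\eta>0$, $p\in(0,1)$, and for $\tilde x\in\mathbb{R}^n$ define $(w(\tilde{x}))_i=\big(\eta/\sqrt{\eta^2+(|D\tilde{x}|)_i^2}\big)^{1-p}$. A reconstructor is a Lipschitz continuous map $\Psi:\mathbb{R}^m\to\mathbb{R}^n$. $\odot$ is the entrywise product. *)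

From HB Require Import structures.
From mathcomp Require Import all_boot all_order all_algebra.
From mathcomp Require Import all_classical all_reals all_analysis.
Set Implicit Arguments. Unset Strict Implicit. Unset Printing Implicit Defensive.
Import Order.TTheory GRing.Theory Num.Theory.
Local Open Scope ring_scope.

Section Defs.
Variable R : realType.

Definition norm2 (k : nat) (v : 'cV[R]_k) : R :=
  Num.sqrt (\sum_(i < k) (v i 0) ^+ 2).

(* |Dx| in R^n, with Dx = [D_h x; D_v x] *)
Definition absD (n : nat) (Dh Dv : 'M[R]_n) (x : 'cV[R]_n) : 'cV[R]_n :=
  \col_i Num.sqrt (((Dh *m x) i 0) ^+ 2 + ((Dv *m x) i 0) ^+ 2).

Definition weight (n : nat) (Dh Dv : 'M[R]_n) (eta p : R) (xt : 'cV[R]_n)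
  : 'cV[R]_n :=
  \col_i powR (eta / Num.sqrt (eta ^+ 2 + (absD Dh Dv xt i 0) ^+ 2)) (1 - p).

Definition Jfun (m n : nat) (K : 'M[R]_(m, n)) (Dh Dv : 'M[R]_n)
  (lambda eta p : R) (Psi : 'cV[R]_m -> 'cV[R]_n) (y : 'cV[R]_m)
  (x : 'cV[R]_n) : R :=
  (norm2 (K *m x - y)) ^+ 2 +
  lambda * \sum_(i < n) `| weight Dh Dv eta p (Psi y) i 0 * absD Dh Dv x i 0 |.

Definition inX (n : nat) (x : 'cV[R]_n) : Prop := forall i, 0 <= x i 0.

Definition is_minimizer_X (n : nat) (J : 'cV[R]_n -> R) (x : 'cV[R]_n) : Prop :=
  inX x /\ forall z, inX z -> J x <= J z.

Definition is_unique_minimizer_X (n : nat) (J : 'cV[R]_n -> R) (x : 'cV[R]_n)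
  : Prop :=
  is_minimizer_X J x /\ forall z, is_minimizer_X J z -> z = x.

Definition lipschitz_map (m n : nat) (Psi : 'cV[R]_m -> 'cV[R]_n) : Prop :=
  exists L : R, forall y1 y2, norm2 (Psi y1 - Psi y2) <= L * norm2 (y1 - y2).

Definition trivial_common_kernel (m n : nat) (K : 'M[R]_(m, n)) (Dh Dv : 'M[R]_n)
  : Prop :=
  forall x : 'cV[R]_n, K *m x = 0 -> Dh *m x = 0 -> Dv *m x = 0 -> x = 0.

End Defs.

From HB Require Import structures.
From mathcomp Require Import all_boot all_order all_algebra.
From mathcomp Require Import all_classical all_reals all_analysis.
From mathcomp Require Import lra.
Import Order.TTheory GRing.Theory Num.Theory.
Import numFieldNormedType.Exports.
Local Open Scope ring_scope.
Local Open Scope classical_set_scope.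

Set Implicit Arguments.
Unset Strict Implicit.
Unset Printing Implicit Defensive.

(* Comparing a minimizer x_k of J_{Psi,delta_k} with 0 gives
   J_{Psi,delta_k}(x_k) <= |y^delta_k|^2.  This bounds K x_k and, because the weights
   w(Psi(y^delta_k)) converge to the positive w(Psi(y^0)), also D x_k; as ker K and ker D
   meet only in 0, [K; D] has a left inverse, so the x_k are bounded.  A subsequence then
   converges to some r in X, and since J_{Psi,delta}(x) depends continuously on
   (y^delta, x), passing to the limit in J_{Psi,delta_k}(x_k) <= J_{Psi,delta_k}(z) shows
   that r minimizes J_{Psi,0} over X.  Uniqueness gives r = x*_{Psi,0}. *)

Lemma powR_continuous (R : realType) (q a : R) :
  0 < a -> {for a, continuous (fun x : R => powR x q)}.
Proof.
move=> a0; apply/differentiable_continuous/derivable1_diffP.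
by apply: (@derivable_powR R 1 q); rewrite in_itv /= a0.
Qed.

Section matrix_convergence.
Variable R : realType.

Lemma normr_mx_entry_le m n (A : 'M[R]_(m, n)) i j : `|A i j| <= `|A|.
Proof. by rewrite [`|A|]mx_normrE (le_bigmax _ _ (i, j)). Qed.

Lemma mx_norm_le m n (A : 'M[R]_(m, n)) b :
  0 <= b -> (forall i j, `|A i j| <= b) -> `|A| <= b.
Proof. by move=> b0 Ab; rewrite [`|A|]mx_normrE; apply: bigmax_le => // -[i j]. Qed.

Context {T : Type} {F : set_system T} {FF : Filter F}.

Lemma cvg_mx_entry m n (f : T -> 'M[R]_(m, n)) (M : 'M[R]_(m, n)) i j :
  f @ F --> M -> (fun t => f t i j) @ F --> M i j.
Proof. by move=> fM; exact: (cvg_comp _ _ fM (@coord_continuous _ _ _ i j M)). Qed.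

Lemma cvg_mxP m n (f : T -> 'M[R]_(m, n)) (M : 'M[R]_(m, n)) :
  f @ F --> M <-> forall i j, (fun t => f t i j) @ F --> M i j.
Proof.
split=> [fM i j|fM]; first exact: cvg_mx_entry.
apply/cvgrPdist_lt => _ /posnumP[e].
have Fe : \forall t \near F, forall i j, `|M i j - f t i j| < e%:num.
  apply: filter_forall => i; apply: filter_forall => j.
  exact: cvgr_dist_lt (fM i j) _ _.
apply: filterS Fe => t Mf; rewrite [`|_|]mx_normrE.
by apply: bigmax_lt => // -[i j] _; rewrite !mxE.
Qed.

Lemma cvg_sum k (f : 'I_k -> T -> R) (l : 'I_k -> R) :
  (forall i, f i @ F --> l i) -> (fun t => \sum_i f i t) @ F --> \sum_i l i.
Proof. by move=> fl; apply: (cvg_big add_continuous) => // i _; exact: fl. Qed.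

Lemma cvg_mulmx p m n (A : 'M[R]_(p, m)) (f : T -> 'M[R]_(m, n)) M :
  f @ F --> M -> (fun t => A *m f t) @ F --> A *m M.
Proof.
move=> fM; apply/cvg_mxP => i j; rewrite mxE; under eq_fun do rewrite mxE.
by apply: cvg_sum => k; apply: cvgM; [exact: cvg_cst | exact: cvg_mx_entry].
Qed.

End matrix_convergence.

Section euclidean_norm.
Variable R : realType.

Lemma norm2_ge0 k (v : 'cV[R]_k) : 0 <= norm2 v.
Proof. exact: sqrtr_ge0. Qed.

Lemma norm2_0 k : norm2 (0 : 'cV[R]_k) = 0.
Proof. by rewrite /norm2 big1 ?sqrtr0 // => i _; rewrite mxE expr0n. Qed.

Lemma normr_coord_le_norm2 k (v : 'cV[R]_k) i : `|v i 0| <= norm2 v.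
Proof.
rewrite /norm2 -sqrtr_sqr; apply: ler_wsqrtr.
by rewrite (bigD1 i) //= lerDl sumr_ge0 // => j _; exact: sqr_ge0.
Qed.

Context {T : Type} {F : set_system T} {FF : Filter F}.

Lemma cvg_norm2 k (f : T -> 'cV[R]_k) v :
  f @ F --> v -> (fun t => norm2 (f t)) @ F --> norm2 v.
Proof.
move=> fv; rewrite /norm2; apply: continuous_cvg; first exact: sqrt_continuous.
apply: cvg_sum => i; rewrite expr2; under eq_fun do rewrite expr2.
by apply: cvgM; exact: cvg_mx_entry.
Qed.

Lemma norm2_le_cvg k (f : T -> 'cV[R]_k) v (g : T -> R) :
  (forall t, norm2 (f t - v) <= g t) -> g @ F --> 0 -> f @ F --> v.
Proof.
move=> fg g0; apply/cvg_mxP => i j; rewrite (ord1 j).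
apply/cvgrPdist_lt => e e0; apply: filterS (cvgr_dist_lt _ _ g0 _ e0) => t.
rewrite sub0r normrN distrC; apply: le_lt_trans.
have := normr_coord_le_norm2 (f t - v) i; rewrite !mxE => /le_trans; apply.
exact: le_trans (fg t) (ler_norm _).
Qed.

End euclidean_norm.

Lemma lipschitz_map_continuous (R : realType) m n (Psi : 'cV[R]_m -> 'cV[R]_n) :
  lipschitz_map Psi -> continuous Psi.
Proof.
move=> [L PsiL] y.
apply: (norm2_le_cvg (F := nbhs y) (g := fun z => L * norm2 (z - y))) => // z.
have -> : 0 = L * norm2 (y - y) by rewrite subrr norm2_0 mulr0.
apply: cvgM; first exact: cvg_cst.
by apply: cvg_norm2; apply: cvgB; [exact: cvg_id | exact: cvg_cst].
Qed.

Section weighted_total_variation.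
Variables (R : realType) (n : nat) (Dh Dv : 'M[R]_n) (eta p : R).
Hypothesis eta_gt0 : 0 < eta.

Lemma absD_ge0 x i : 0 <= absD Dh Dv x i 0.
Proof. by rewrite mxE sqrtr_ge0. Qed.

Lemma absD0 i : absD Dh Dv 0 i 0 = 0.
Proof. by rewrite mxE !mulmx0 !mxE expr0n addr0 sqrtr0. Qed.

Lemma normr_Dh_le_absD x i : `|(Dh *m x) i 0| <= absD Dh Dv x i 0.
Proof.
by rewrite [absD _ _ _ _ _]mxE -sqrtr_sqr; apply: ler_wsqrtr; rewrite lerDl sqr_ge0.
Qed.

Lemma normr_Dv_le_absD x i : `|(Dv *m x) i 0| <= absD Dh Dv x i 0.
Proof.
by rewrite [absD _ _ _ _ _]mxE -sqrtr_sqr; apply: ler_wsqrtr; rewrite lerDr sqr_ge0.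
Qed.

Lemma weight_gt0 u i : 0 < weight Dh Dv eta p u i 0.
Proof.
rewrite mxE powR_gt0 // divr_gt0 // sqrtr_gt0.
by rewrite ltr_wpDr ?sqr_ge0 ?exprn_gt0.
Qed.

Context {T : Type} {F : set_system T} {FF : Filter F}.

Lemma cvg_absD (f : T -> 'cV[R]_n) (x : 'cV[R]_n) :
  f @ F --> x -> (fun t => absD Dh Dv (f t)) @ F --> absD Dh Dv x.
Proof.
move=> fx; apply/cvg_mxP => i j; rewrite (ord1 j) mxE; under eq_fun do rewrite mxE.
apply: continuous_cvg; first exact: sqrt_continuous.
rewrite !expr2; under eq_fun do rewrite !expr2.
by apply: cvgD; apply: cvgM; apply: cvg_mx_entry; exact: cvg_mulmx.
Qed.

Lemma cvg_weight (f : T -> 'cV[R]_n) (u : 'cV[R]_n) :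
  f @ F --> u -> (fun t => weight Dh Dv eta p (f t)) @ F --> weight Dh Dv eta p u.
Proof.
move=> fu; apply/cvg_mxP => i j; rewrite (ord1 j) mxE; under eq_fun do rewrite mxE.
have s_gt0 x : 0 < Num.sqrt (eta ^+ 2 + absD Dh Dv x i 0 ^+ 2).
  by rewrite sqrtr_gt0 ltr_wpDr ?sqr_ge0 ?exprn_gt0.
apply: (continuous_cvg _ (h := fun b => powR b (1 - p))).
  exact/powR_continuous/divr_gt0.
apply: cvgM; first exact: cvg_cst.
apply: cvgV; first by rewrite gt_eqF.
apply: continuous_cvg; first exact: sqrt_continuous.
apply: cvgD; first exact: cvg_cst.
rewrite expr2; under eq_fun do rewrite expr2.
by apply: cvgM; apply: cvg_mx_entry; exact: cvg_absD.
Qed.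

Lemma cvg_Jfun m (K : 'M[R]_(m, n)) lambda (Psi : 'cV[R]_m -> 'cV[R]_n)
    (fy : T -> 'cV[R]_m) (fx : T -> 'cV[R]_n) (y : 'cV[R]_m) (x : 'cV[R]_n) :
  continuous Psi -> fy @ F --> y -> fx @ F --> x ->
  (fun t => Jfun K Dh Dv lambda eta p Psi (fy t) (fx t)) @ F -->
    Jfun K Dh Dv lambda eta p Psi y x.
Proof.
move=> Psi_cont fyy fxx; apply: cvgD.
  rewrite expr2; under eq_fun do rewrite expr2.
  by apply: cvgM; apply: cvg_norm2; apply: cvgB => //; exact: cvg_mulmx.
apply: cvgM; first exact: cvg_cst.
apply: cvg_sum => i; apply: cvg_norm; apply: cvgM.
  apply: cvg_mx_entry; apply: cvg_weight.
  exact: (continuous_cvg _ (Psi_cont y) fyy).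
by apply: cvg_mx_entry; exact: cvg_absD.
Qed.

End weighted_total_variation.

Lemma normr_mulmx_le (R : realType) p q r (A : 'M[R]_(p, q)) (B : 'M[R]_(q, r)) :
  `|A *m B| <= q%:R * (`|A| * `|B|).
Proof.
apply: mx_norm_le => [|i j]; first by rewrite !mulr_ge0.
have -> : q%:R * (`|A| * `|B|) = \sum_(k < q) `|A| * `|B|.
  by rewrite sumr_const card_ord mulr_natl.
rewrite mxE; apply: le_trans (ler_norm_sum _ _ _) _.
by apply: ler_sum => k _; rewrite normrM ler_pM ?normr_mx_entry_le.
Qed.

Section coercivity.
Variables (R : realType) (m n : nat) (K : 'M[R]_(m, n)) (Dh Dv : 'M[R]_n).
Variables (lambda eta p : R) (Psi : 'cV[R]_m -> 'cV[R]_n).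
Hypotheses (lambda_gt0 : 0 < lambda) (eta_gt0 : 0 < eta).
Implicit Types (y : 'cV[R]_m) (x : 'cV[R]_n).

Local Notation J := (Jfun K Dh Dv lambda eta p Psi).
Local Notation w y := (weight Dh Dv eta p (Psi y)).

Lemma Jfun0 y : J y 0 = norm2 y ^+ 2.
Proof.
rewrite /Jfun mulmx0 sub0r big1 ?mulr0 ?addr0 => [|i _]; last first.
  by rewrite absD0 mulr0 normr0.
by rewrite /norm2; under eq_bigr do rewrite mxE sqrrN.
Qed.

Lemma fidelity_le_Jfun y x : norm2 (K *m x - y) ^+ 2 <= J y x.
Proof.
rewrite lerDl; apply: mulr_ge0; first exact: ltW.
by apply: sumr_ge0 => i _.
Qed.

Lemma penalty_le_Jfun y x i : lambda * (w y i 0 * absD Dh Dv x i 0) <= J y x.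
Proof.
apply: ler_wpDl; first exact: sqr_ge0.
apply: ler_wpM2l; first exact: ltW.
rewrite (bigD1 i) //=; apply: ler_wpDr; first by apply: sumr_ge0 => j _.
by rewrite ger0_norm // mulr_ge0 ?absD_ge0 // ltW ?weight_gt0.
Qed.

Lemma minimizer_Jfun_le y x : is_minimizer_X (J y) x -> J y x <= norm2 y ^+ 2.
Proof. by move=> [_ xmin]; rewrite -Jfun0; apply: xmin => i; rewrite mxE. Qed.

Lemma minimizer_fidelity_le y x i :
  is_minimizer_X (J y) x -> `|(K *m x) i 0| <= 2 * norm2 y.
Proof.
move=> /minimizer_Jfun_le Jx.
have res_le : norm2 (K *m x - y) <= norm2 y.
  rewrite -ler_sqr ?nnegrE ?norm2_ge0 //.
  exact: le_trans (fidelity_le_Jfun y x) Jx.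
have -> : (K *m x) i 0 = (K *m x - y) i 0 + y i 0 by rewrite !mxE subrK.
have := ler_normD ((K *m x - y) i 0) (y i 0).
have := normr_coord_le_norm2 (K *m x - y) i; have := normr_coord_le_norm2 y i.
lra.
Qed.

Lemma minimizer_absD_le y x i : is_minimizer_X (J y) x ->
  absD Dh Dv x i 0 <= norm2 y ^+ 2 / (lambda * w y i 0).
Proof.
move=> /minimizer_Jfun_le Jx.
rewrite ler_pdivlMr ?mulr_gt0 ?weight_gt0 // mulrC -mulrA.
exact: le_trans (penalty_le_Jfun y x i) Jx.
Qed.

Definition minimizer_bound y :=
  2 * norm2 y + \sum_i norm2 y ^+ 2 / (lambda * w y i 0).

Lemma minimizer_stack_le y x : is_minimizer_X (J y) x ->
  `|col_mx K (col_mx Dh Dv) *m x| <= minimizer_bound y.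
Proof.
move=> xmin.
have term_ge0 i : 0 <= norm2 y ^+ 2 / (lambda * w y i 0).
  by rewrite divr_ge0 ?sqr_ge0 // mulr_ge0 ?ltW ?weight_gt0.
have absD_le i : absD Dh Dv x i 0 <= minimizer_bound y.
  apply: le_trans (minimizer_absD_le i xmin) _.
  rewrite /minimizer_bound (bigD1 i) //= addrCA lerDl.
  by rewrite addr_ge0 ?mulr_ge0 ?norm2_ge0 //; apply: sumr_ge0 => j _.
apply: mx_norm_le => [|l j].
  by rewrite addr_ge0 ?mulr_ge0 ?norm2_ge0 //; apply: sumr_ge0 => i _.
rewrite (ord1 j) !mul_col_mx -(splitK l); case: (fintype.split l) => l' /=.
  rewrite col_mxEu; apply: le_trans (minimizer_fidelity_le l' xmin) _.
  by rewrite lerDl; apply: sumr_ge0 => i _.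
rewrite col_mxEd -(splitK l'); case: (fintype.split l') => l'' /=.
  by rewrite col_mxEu; exact: le_trans (normr_Dh_le_absD _ _ _ _) (absD_le l'').
by rewrite col_mxEd; exact: le_trans (normr_Dv_le_absD _ _ _ _) (absD_le l'').
Qed.

Lemma trivial_common_kernel_left_inverse : trivial_common_kernel K Dh Dv ->
  exists L : 'M[R]_(n, m + (n + n)), L *m col_mx K (col_mx Dh Dv) = 1%:M.
Proof.
move=> ker; set M := col_mx K (col_mx Dh Dv).
have /row_freeP[L LM] : row_free M^T.
  apply: inj_row_free => v vM.
  have : M *m v^T = 0 by rewrite -[M]trmxK -trmx_mul vM trmx0.
  rewrite !mul_col_mx => /eqP.
  rewrite !col_mx_eq0 => /and3P[/eqP vK /eqP vh /eqP vv].
  by rewrite -[v]trmxK (ker _ vK vh vv) trmx0.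
by exists L^T; rewrite -[M]trmxK -trmx_mul LM trmx1.
Qed.

Lemma minimizer_norm_le : trivial_common_kernel K Dh Dv ->
  exists2 c, 0 <= c &
    forall y x, is_minimizer_X (J y) x -> `|x| <= c * minimizer_bound y.
Proof.
move=> /trivial_common_kernel_left_inverse[L LM].
exists ((m + (n + n))%:R * `|L|) => [|y x xmin]; first by rewrite mulr_ge0.
rewrite -[x]mul1mx -LM -mulmxA -mulrA; apply: le_trans (normr_mulmx_le _ _) _.
by rewrite !ler_wpM2l // minimizer_stack_le.
Qed.

Context {T : Type} {F : set_system T} {FF : Filter F}.

Lemma cvg_minimizer_bound (fy : T -> 'cV[R]_m) (y : 'cV[R]_m) :
  continuous Psi -> fy @ F --> y ->
  (fun t => minimizer_bound (fy t)) @ F --> minimizer_bound y.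
Proof.
move=> Psi_cont fyy; apply: cvgD.
  by apply: cvgM; [exact: cvg_cst | exact: cvg_norm2].
apply: cvg_sum => i; apply: cvgM.
  by rewrite expr2; under eq_fun do rewrite expr2; apply: cvgM; exact: cvg_norm2.
apply: cvgV; first by rewrite mulf_neq0 ?gt_eqF ?weight_gt0.
apply: cvgM; first exact: cvg_cst.
apply: cvg_mx_entry; apply: cvg_weight => //.
exact: (continuous_cvg _ (Psi_cont y) fyy).
Qed.

Lemma minimizers_eventually_bounded (fy : T -> 'cV[R]_m) (fx : T -> 'cV[R]_n)
    (y : 'cV[R]_m) :
  trivial_common_kernel K Dh Dv -> continuous Psi -> fy @ F --> y ->
  (forall t, is_minimizer_X (J (fy t)) (fx t)) ->
  exists B, \forall t \near F, forall i, `|fx t i 0| <= B.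
Proof.
move=> ker Psi_cont fyy fx_min; have [c c0 xc] := minimizer_norm_le ker.
exists (c * (minimizer_bound y + 1)).
have bound_lt : \forall t \near F, minimizer_bound (fy t) < minimizer_bound y + 1.
  by apply: (cvgr_lt _ (cvg_minimizer_bound Psi_cont fyy)); rewrite ltrDl.
apply: filterS bound_lt => t bound_lt i.
apply: le_trans (normr_mx_entry_le _ _ _) _.
by apply: le_trans (xc _ _ (fx_min t)) _; rewrite ler_wpM2l // ltW.
Qed.

End coercivity.

Lemma cvg_subseq {T : topologicalType} (u : nat -> T) (l : T) (phi : nat -> nat) :
  {homo phi : a b / (a < b)%N} -> u @ \oo --> l -> (fun j => u (phi j)) @ \oo --> l.
Proof.
move=> phi_incr; apply: cvg_comp => A [N _ NA]; exists N => // j Nj; apply: NA.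
have phi_ge k : (k <= phi k)%N.
  by elim: k => // k IH; exact: leq_ltn_trans IH (phi_incr _ _ (ltnSn k)).
exact: leq_trans Nj (phi_ge j).
Qed.

Lemma compact_cV_box (R : realType) n (B : R) :
  compact [set x : 'cV[R]_n | forall i, `|x i 0| <= B].
Proof.
have -> : [set x : 'cV[R]_n | forall i, `|x i 0| <= B] =
    trmx @` [set v : 'rV[R]_n | forall i, `[- B, B]%classic (v ord0 i)].
  apply/seteqP; split => [x xB | _ [v vB <-] i].
    by exists x^T; rewrite ?trmxK // => i; rewrite mxE /= in_itv /= -ler_norml.
  by rewrite mxE; have := vB i; rewrite /= in_itv -ler_norml.
apply: continuous_compact; last first.
  by apply: (@rV_compact _ _ (fun=> `[- B, B]%classic)) => _; exact: segment_compact.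
apply: continuous_subspaceT => v; apply/(cvg_mxP (F := nbhs v)) => i j.
rewrite mxE; under eq_fun do rewrite mxE; exact: (@coord_continuous _ _ _ j i v).
Qed.

Lemma cluster_subsequence (R : realType) (V : pseudoMetricNormedZmodType R)
    (u : nat -> V) r :
  cluster (u @ \oo) r -> exists phi : nat -> nat,
    {homo phi : a b / (a < b)%N} /\ (fun j => u (phi j)) @ \oo --> r.
Proof.
move=> ur.
have near_r (Nj : nat * nat) : exists k, (Nj.1 < k)%N /\ `|r - u k| < Nj.2.+1%:R^-1.
  have tail : (u @ \oo) [set v | exists2 k, (Nj.1 < k)%N & v = u k].
    by exists Nj.1.+1 => // k Nk; exists k.
  have ball_r : nbhs r [set v | `|r - v| < Nj.2.+1%:R^-1].
    exact: (cvgr_dist_lt _ _ cvg_id).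
  by have [_ [[k Nk ->] rk]] := ur _ _ tail ball_r; exists k.
have [g gP] := choice near_r.
pose phi := fix phi j := if j is j'.+1 then g (phi j', j) else g (0, 0)%N.
have phi_step j : (phi j < phi j.+1)%N by exact: (gP (phi j, j.+1)).1.
have phi_near j : `|r - u (phi j)| < j.+1%:R^-1.
  by case: j => [|j]; [exact: (gP (0, 0)%N).2 | exact: (gP (phi j, j.+1)).2].
exists phi; split; first exact: (homo_ltn ltn_trans).
apply/cvgrPdist_lt => e e0; near=> j; apply: lt_trans (phi_near j) _.
by near: j; exact: (cvgr_lt _ cvg_harmonic).
Unshelve. all: by end_near.
Qed.

Section limits_of_minimizers.
Variable R : realType.

Lemma inX_cvg n (u : nat -> 'cV[R]_n) (x : 'cV[R]_n) :
  (forall k, inX (u k)) -> u @ \oo --> x -> inX x.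
Proof.
move=> uX ux i.
have uxi : (fun k => u k i 0) @ \oo --> x i 0 by exact: cvg_mx_entry.
apply: (ler_cvg_to (cvg_cst 0) uxi).
by apply: nearW => k; exact: uX.
Qed.

Lemma minimizer_of_limit n (J : nat -> 'cV[R]_n -> R) (J0 : 'cV[R]_n -> R)
    (u : nat -> 'cV[R]_n) (x : 'cV[R]_n) :
  (forall k, is_minimizer_X (J k) (u k)) -> u @ \oo --> x ->
  (fun k => J k (u k)) @ \oo --> J0 x ->
  (forall z, (fun k => J k z) @ \oo --> J0 z) ->
  is_minimizer_X J0 x.
Proof.
move=> u_min ux Jux Jz; split=> [|z zX].
  by apply: inX_cvg ux => k; case: (u_min k).
by apply: ler_cvg_to Jux (Jz z) _; apply: nearW => k; case: (u_min k) => _; exact.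
Qed.

End limits_of_minimizers.

Theorem theorem3 (R : realType) (m n : nat) (K : 'M[R]_(m, n))
  (Dh Dv : 'M[R]_n) (xGT : 'cV[R]_n) (lambda eta p : R)
  (Psi : 'cV[R]_m -> 'cV[R]_n)
  (delta : nat -> R) (e : nat -> 'cV[R]_m)
  (xs : nat -> 'cV[R]_n) (x0 : 'cV[R]_n) :
  (m <= n)%N ->
  inX xGT ->
  0 < lambda -> 0 < eta -> 0 < p -> p < 1 ->
  trivial_common_kernel K Dh Dv ->
  lipschitz_map Psi ->
  (forall k, 0 < delta k) ->
  delta @ \oo --> 0 ->
  (forall k, norm2 (e k) <= delta k) ->
  (forall k, is_unique_minimizer_X
               (Jfun K Dh Dv lambda eta p Psi (K *m xGT + e k)) (xs k)) ->
  is_unique_minimizer_X (Jfun K Dh Dv lambda eta p Psi (K *m xGT)) x0 ->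
  exists phi : nat -> nat,
    {homo phi : a b / (a < b)%N} /\ (fun j => xs (phi j)) @ \oo --> x0.
Proof.
move=> _ _ lambda_gt0 eta_gt0 _ _ ker Psi_lip _ delta0 e_le xs_umin [_ x0_uniq].
have xs_min k := (xs_umin k).1.
have Psi_cont := lipschitz_map_continuous Psi_lip.
have y_cvg : (fun k => K *m xGT + e k) @ \oo --> K *m xGT.
  by apply: (norm2_le_cvg _ delta0) => k; rewrite addrAC subrr add0r; exact: e_le.
have [B xs_box] :=
  minimizers_eventually_bounded lambda_gt0 eta_gt0 ker Psi_cont y_cvg xs_min.
have [r [_ r_cluster]] := compact_cV_box (F := xs @ \oo) _ xs_box.
have [phi [phi_incr xs_phi_r]] := cluster_subsequence r_cluster.
exists phi; split => //; suff -> : x0 = r by [].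
have y_phi := cvg_subseq phi_incr y_cvg.
apply/esym/x0_uniq/(minimizer_of_limit (fun j => xs_min (phi j)) xs_phi_r).
  exact: cvg_Jfun Psi_cont y_phi xs_phi_r.
by move=> z; exact: cvg_Jfun Psi_cont y_phi (cvg_cst z).
Qed.
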